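(* Let $A$ be a set with a ternary operation $p\colon A^3\to A$ and two constants $0,1\in A$ satisfying, for all $a,b,c,b_1,b_2,b_3\in A$: (T1) $p(0,a,1)=a$; (T2) $p(a,b,a)=a$; (T3) $p(a,p(b_1,b_2,b_3),c)=p(p(a,b_1,c),b_2,p(a,b_3,c))$; (T4) $p(a,0,b)=a=p(b,1,a)$. Define $\bar{a}=p(1,a,0)$, $a\cdot b=p(0,a,b)$ and $a+b=p(a,b,\bar a)$. Then the following conditions are equivalent: (i) $(A,+,\cdot,0,1)$ is a unitary (right) near-ring of characteristic $2$; (ii) $p(a,b,c)=a+(b\cdot(a+c))$ for all $a,b,c\in A$; (iii) $a+a=0$ for all $a\in A$; (iv) $(a+b)\cdot c=(a\cdot c)+(b\cdot c)$ for all $a,b,c\in A$.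
   Context: A unitary (right) near-ring $(A,+,\cdot,0,1)$ is a set $A$ with binary operations $+$ and $\cdot$ such that $(A,+,0)$ is a group (not assumed abelian a priori), $(A,\cdot,1)$ is a monoid, and the right distributive law $(a+b)\cdot c=a\cdot c+b\cdot c$ holds for all $a,b,c$. It has characteristic $2$ if $b+b=0$ for all $b\in A$. *)

Section Defs.
Context {A : Type}.

Definition ternary_axioms (p : A -> A -> A -> A) (zero one : A) : Prop :=
  (forall a, p zero a one = a) /\
  (forall a b, p a b a = a) /\
  (forall a b1 b2 b3 c,
      p a (p b1 b2 b3) c = p (p a b1 c) b2 (p a b3 c)) /\
  (forall a b, p a zero b = a /\ p b one a = a).

Definition tbar (p : A -> A -> A -> A) (zero one : A) (a : A) : A := p one a zero.
Definition tmul (p : A -> A -> A -> A) (zero : A) (a b : A) : A := p zero a b.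
Definition tadd (p : A -> A -> A -> A) (zero one : A) (a b : A) : A :=
  p a b (tbar p zero one a).

Definition is_group (add : A -> A -> A) (zero : A) : Prop :=
  (forall a b c, add a (add b c) = add (add a b) c) /\
  (forall a, add zero a = a /\ add a zero = a) /\
  (forall a, exists b, add a b = zero /\ add b a = zero).

Definition is_monoid (mul : A -> A -> A) (one : A) : Prop :=
  (forall a b c, mul a (mul b c) = mul (mul a b) c) /\
  (forall a, mul one a = a /\ mul a one = a).

Definition unitary_right_near_ring (add mul : A -> A -> A) (zero one : A) : Prop :=
  is_group add zero /\ is_monoid mul one /\
  (forall a b c, mul (add a b) c = add (mul a c) (mul b c)).

Definition char2 (add : A -> A -> A) (zero : A) : Prop :=
  forall b, add b b = zero.

End Defs.

(* The axioms make [+] associative with neutral element 0, the bar an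
   involution with p(c, b̄, a) = p(a, b, c), and give a + b·c = p(a, b, a + c).
   Hence the right-hand side of (ii) is p(a, b, a + (a + c)), so (ii) says
   exactly that a + a = 0.  In characteristic 2 the monoid (A, +) is an abelian
   group, and (a + b)·c = p(a·c, b, c + a·c) rewrites to a·c + b·c.  Conversely,
   right distributivity gives a + a = (1 + 1)·a = 0·a = 0, since 1 + 1 = 1̄ = 0. *)


Lemma char2_commutative {A : Type} (add : A -> A -> A) (zero : A) :
  is_monoid add zero -> char2 add zero -> forall x y, add x y = add y x.
Proof.
  intros [addA add0] Hchar2 x y.
  assert (add0l : forall a, add zero a = a) by apply add0.
  assert (add0r : forall a, add a zero = a) by apply add0.
  (* Reassociating x + (x + y) + (x + y) + y cancels the adjacent equal terms. *)
  assert (E : add x (add (add (add x y) (add x y)) y) = add y x).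
  { rewrite !addA, (Hchar2 x), add0l, <- (addA (add y x) y y), (Hchar2 y), add0r.
    reflexivity. }
  rewrite (Hchar2 (add x y)), add0l in E.
  exact E.
Qed.

Section TernaryAlgebra.
Context {A : Type} {p : A -> A -> A -> A} {zero one : A}.
Hypothesis Hp : ternary_axioms p zero one.

Let p_0a1 : forall a, p zero a one = a.
Proof. apply Hp. Qed.
Let p_distr : forall a b1 b2 b3 c, p a (p b1 b2 b3) c = p (p a b1 c) b2 (p a b3 c).
Proof. apply Hp. Qed.
Let p_a0b : forall a b, p a zero b = a.
Proof. apply Hp. Qed.
Let p_b1a : forall a b, p b one a = a.
Proof. apply Hp. Qed.

Local Notation bar := (tbar p zero one).
Local Notation add := (tadd p zero one).
Local Notation mul := (tmul p zero).

Lemma tbar0 : bar zero = one.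
Proof. apply p_a0b. Qed.

Lemma tbar1 : bar one = zero.
Proof. apply p_b1a. Qed.

Lemma tbarK x : bar (bar x) = x.
Proof. unfold tbar. rewrite p_distr, p_b1a, p_a0b. apply p_0a1. Qed.

Lemma p_tbar_swap a b c : p c (bar b) a = p a b c.
Proof. unfold tbar. rewrite p_distr, p_b1a, p_a0b. reflexivity. Qed.

Lemma tbar_tadd x y : bar (add x y) = add x (bar y).
Proof.
  unfold tadd at 1, tbar at 1. rewrite p_distr.
  change (p (bar x) y (bar (bar x)) = add x (bar y)).
  rewrite tbarK. unfold tadd. symmetry. apply p_tbar_swap.
Qed.

Lemma taddA x y z : add x (add y z) = add (add x y) z.
Proof.
  unfold tadd at 1 2. rewrite p_distr.
  change (p (add x y) z (add x (bar y)) = add (add x y) z).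
  rewrite <- tbar_tadd. reflexivity.
Qed.

Lemma tadd0l a : add zero a = a.
Proof. unfold tadd. rewrite tbar0. apply p_0a1. Qed.

Lemma tadd0r a : add a zero = a.
Proof. apply p_a0b. Qed.

Lemma tadd_monoid : is_monoid add zero.
Proof. split; [exact taddA | split; [apply tadd0l | apply tadd0r]]. Qed.

Lemma tmulA a b c : mul a (mul b c) = mul (mul a b) c.
Proof. unfold tmul. rewrite p_distr, p_a0b. reflexivity. Qed.

Lemma tmul1l a : mul one a = a.
Proof. apply p_b1a. Qed.

Lemma tmul1r a : mul a one = a.
Proof. apply p_0a1. Qed.

Lemma tmul0l a : mul zero a = zero.
Proof. apply p_a0b. Qed.

Lemma tmul_monoid : is_monoid mul one.
Proof. split; [exact tmulA | split; [apply tmul1l | apply tmul1r]]. Qed.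

Lemma tadd_tmul a b c : add a (mul b c) = p a b (add a c).
Proof. unfold tadd at 1, tmul. rewrite p_distr, p_a0b. reflexivity. Qed.

Lemma tmul_taddl a b c : mul (add a b) c = p (mul a c) b (p c a zero).
Proof.
  unfold tadd, tmul, tbar. rewrite p_distr, (p_distr zero one a zero c).
  rewrite p_b1a, p_a0b. reflexivity.
Qed.

Lemma p_expand_of_char2 : char2 add zero ->
  forall a b c, p a b c = add a (mul b (add a c)).
Proof.
  intros Hchar2 a b c.
  rewrite tadd_tmul, taddA, (Hchar2 a), tadd0l.
  reflexivity.
Qed.

Lemma char2_of_p_expand : (forall a b c, p a b c = add a (mul b (add a c))) ->
  char2 add zero.
Proof.
  intros Hexpand a.
  transitivity (add a (mul one (add a zero))).
  - rewrite tmul1l, tadd0r. reflexivity.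
  - rewrite <- Hexpand. apply p_b1a.
Qed.

Lemma tadd_group_of_char2 : char2 add zero -> is_group add zero.
Proof.
  intros Hchar2.
  split; [exact taddA | split; [exact (proj2 tadd_monoid) |]].
  intros a. exists a. split; apply Hchar2.
Qed.

Lemma tmul_taddl_of_char2 : char2 add zero ->
  forall a b c, mul (add a b) c = add (mul a c) (mul b c).
Proof.
  intros Hchar2 a b c.
  rewrite tmul_taddl, tadd_tmul, (p_expand_of_char2 Hchar2 c).
  rewrite tadd0r, (char2_commutative _ _ tadd_monoid Hchar2 c).
  reflexivity.
Qed.

Lemma near_ring_of_char2 : char2 add zero -> unitary_right_near_ring add mul zero one.
Proof.
  intros Hchar2.
  split; [exact (tadd_group_of_char2 Hchar2) |].
  split; [exact tmul_monoid | exact (tmul_taddl_of_char2 Hchar2)].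
Qed.

Lemma char2_of_tmul_taddl :
  (forall a b c, mul (add a b) c = add (mul a c) (mul b c)) -> char2 add zero.
Proof.
  intros Hdistr a.
  rewrite <- (tmul1l a), <- Hdistr.
  rewrite (p_b1a (bar one) one : add one one = bar one), tbar1.
  apply tmul0l.
Qed.

End TernaryAlgebra.

Theorem theorem3 (A : Type) (p : A -> A -> A -> A) (zero one : A)
  (Hp : ternary_axioms p zero one) :
  let add := tadd p zero one in
  let mul := tmul p zero in
  (* (i) *) (unitary_right_near_ring add mul zero one /\ char2 add zero
  <-> (* (ii) *) (forall a b c, p a b c = add a (mul b (add a c)))) /\
  ((forall a b c, p a b c = add a (mul b (add a c)))
  <-> (* (iii) *) (forall a, add a a = zero)) /\
  ((forall a, add a a = zero)
  <-> (* (iv) *) (forall a b c, mul (add a b) c = add (mul a c) (mul b c))).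
Proof.
  intros add mul; subst add mul.
  split; [| split]; split.
  - intros [_ Hchar2]. exact (p_expand_of_char2 Hp Hchar2).
  - intros Hexpand. pose proof (char2_of_p_expand Hp Hexpand) as Hchar2.
    exact (conj (near_ring_of_char2 Hp Hchar2) Hchar2).
  - exact (char2_of_p_expand Hp).
  - exact (p_expand_of_char2 Hp).
  - exact (tmul_taddl_of_char2 Hp).
  - exact (char2_of_tmul_taddl Hp).
Qed.
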